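(* Let $G$ and $H$ be isoclinic finite groups. Then $A_G(t)=A_H\left(\frac{|G|}{|H|}t\right)$ and $B_G(t)=B_H\left(\frac{|G|}{|H|}t\right)$.
   Context: For a finite group $G$ and $n\ge 0$, $G$ acts on $G^n$ by simultaneous conjugation. Let $G^{(n)}\subseteq G^n$ be the set of $n$-tuples of pairwise commuting elements. Let $\alpha_{G,n}$ (resp. $\beta_{G,n}$) be the number of $G$-orbits on $G^n$ (resp. on $G^{(n)}$), and set $A_G(t)=\sum_{n\ge0}\alpha_{G,n}t^n$, $B_G(t)=\sum_{n\ge0}\beta_{G,n}t^n$; these are rational functions of $t$. Two finite groups $G$ and $H$ are isoclinic if there exist isomorphisms $\theta:G/Z(G)\to H/Z(H)$ and $\phi:G'\to H'$ (where $G'$ is the commutator subgroup) such that $\phi([g_1,g_2])=[h_1,h_2]$ whenever $\theta(g_iZ(G))=h_iZ(H)$ for $i=1,2$; i.e. $\phi\circ a_G=a_H\circ(\theta\times\theta)$ where $a_G(g_1Z(G),g_2Z(G))=[g_1,g_2]$. *)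

From HB Require Import structures.
From mathcomp Require Import all_boot all_order all_algebra all_fingroup all_solvable.
Set Implicit Arguments. Unset Strict Implicit. Unset Printing Implicit Defensive.
Import GRing.Theory.

Local Open Scope group_scope.

Definition tuples_in (gT : finGroupType) (G : {set gT}) (n : nat)
  : {set {ffun 'I_n -> gT}} :=
  [set t : {ffun 'I_n -> gT} | [forall i, t i \in G]].

Definition comm_tuples_in (gT : finGroupType) (G : {set gT}) (n : nat)
  : {set {ffun 'I_n -> gT}} :=
  [set t in tuples_in G n | [forall i, forall j, t i * t j == t j * t i]].

Definition tconj (gT : finGroupType) (n : nat) (t : {ffun 'I_n -> gT}) (g : gT)
  : {ffun 'I_n -> gT} := [ffun i => t i ^ g].

Definition conj_orbit (gT : finGroupType) (G : {set gT}) (n : nat)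
  (t : {ffun 'I_n -> gT}) : {set {ffun 'I_n -> gT}} :=
  [set tconj t g | g in G].

Definition alpha (gT : finGroupType) (G : {set gT}) (n : nat) : nat :=
  #|[set conj_orbit G t | t in tuples_in G n]|.

Definition beta (gT : finGroupType) (G : {set gT}) (n : nat) : nat :=
  #|[set conj_orbit G t | t in comm_tuples_in G n]|.

Definition isoclinic (gT hT : finGroupType) (G : {group gT}) (H : {group hT}) : Prop :=
  exists theta : {morphism G / 'Z(G) >-> coset_of 'Z(H)},
  exists phi : {morphism [~: G, G] >-> hT},
    [/\ isom (G / 'Z(G)) (H / 'Z(H)) theta,
        isom [~: G, G] [~: H, H] phi &
        forall g1 g2 h1 h2,
          g1 \in G -> g2 \in G -> h1 \in H -> h2 \in H ->
          theta (coset 'Z(G) g1) = coset 'Z(H) h1 ->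
          theta (coset 'Z(G) g2) = coset 'Z(H) h2 ->
          phi [~ g1, g2] = [~ h1, h2]].

From HB Require Import structures.
From mathcomp Require Import all_boot all_order all_algebra all_fingroup all_solvable.
From mathcomp Require Import ring.
Import GRing.Theory Num.Theory.
Set Implicit Arguments. Unset Strict Implicit. Unset Printing Implicit Defensive.

(* By the Cauchy-Frobenius lemma, |G| alpha_{G,n} counts the tuples (a, t_1, ..., t_n)
   in G with every t_i commuting with a, and |G| beta_{G,n} those where the t_i also
   commute pairwise.  Whether two elements commute only depends on their classes
   modulo Z(G), and the isoclinism transports this relation to H/Z(H).  Hence both
   counts are |Z(G)|^(n+1) N for a count N of tuples in H/Z(H) that is the same for
   H, with |Z(H)| in place of |Z(G)|.  Since |G/Z(G)| = |H/Z(H)|, the ratio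
   |Z(G)|/|Z(H)| is |G|/|H|. *)

Lemma ratio_of_scaled_counts (F : numFieldType) (a b zG zH q N n : nat) :
  (0 < zG)%N -> (0 < zH)%N -> (0 < q)%N ->
  (a * (zG * q) = zG ^ n.+1 * N)%N -> (b * (zH * q) = zH ^ n.+1 * N)%N ->
  (a%:R = ((zG * q)%:R / (zH * q)%:R) ^+ n * b%:R :> F)%R.
Proof.
move=> zG_gt0 zH_gt0 q_gt0 eA eB.
have nz m : (0 < m)%N -> (m%:R != 0 :> F)%R by rewrite pnatr_eq0 -lt0n.
have count_eq z c : (0 < z)%N -> (c * (z * q) = z ^ n.+1 * N)%N ->
    (c%:R = z%:R ^+ n * N%:R / q%:R :> F)%R.
  move=> z_gt0 e; apply: (mulIf (nz _ q_gt0)); rewrite mulfVK ?nz //.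
  apply: (mulfI (nz _ z_gt0)); rewrite -!natrX -!natrM; congr (_%:R)%R.
  by rewrite mulnCA e expnS mulnA.
rewrite (count_eq _ _ zG_gt0 eA) (count_eq _ _ zH_gt0 eB) !natrM.
rewrite invfM mulrACA mulfV ?nz // mulr1 expr_div_n.
by field; rewrite nz ?expf_neq0 ?nz.
Qed.

Definition cent_tuple (X : Type) (c : rel X) (pw : bool) n (a : X)
    (t : {ffun 'I_n -> X}) : bool :=
  [forall i, c (t i) a] && (pw ==> [forall i, forall j, c (t i) (t j)]).

Definition cent_count (X : finType) (D : {set X}) (c : rel X) (pw : bool) n : nat :=
  \sum_(a in D)
    #|[set t : {ffun 'I_n -> X} | [forall i, t i \in D] && cent_tuple c pw a t]|.

Section Fibers.

Variables (X Y : finType) (f : X -> Y) (D : {set X}) (T : {set Y}) (k : nat).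
Hypothesis f_into : {in D, forall x, f x \in T}.
Hypothesis card_fiber : {in T, forall y, #|[set x in D | f x == y]| = k}.

Lemma sum_over_fibers (F : Y -> nat) :
  \sum_(x in D) F (f x) = k * \sum_(y in T) F y.
Proof.
rewrite (partition_big f (mem T)) // big_distrr; apply: eq_bigr => y Ty.
rewrite (eq_bigr (fun=> F y)) => [|x /andP[_ /eqP ->] //].
by rewrite sum_nat_const -(card_fiber Ty) cardsE.
Qed.

Lemma card_tuples_over_fibers m (P : pred {ffun 'I_m -> Y}) :
  #|[set t : {ffun 'I_m -> X} | [forall i, t i \in D] && P [ffun i => f (t i)]]|
  = k ^ m * #|[set s : {ffun 'I_m -> Y} | [forall i, s i \in T] && P s]|.
Proof.
pose fmap (t : {ffun 'I_m -> X}) := [ffun i => f (t i)].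
pose S := [set s : {ffun 'I_m -> Y} | [forall i, s i \in T] && P s].
rewrite -!sum1_card (partition_big fmap (mem S)) /=; last first.
  move=> t; rewrite !inE => /andP[/forallP Dt Pt]; rewrite Pt andbT.
  by apply/forallP => i; rewrite ffunE f_into.
rewrite big_distrr /=; apply: eq_bigr => s; rewrite inE => /andP[/forallP Ts Ps].
rewrite sum1_card muln1.
pose F i := [pred x in D | f x == s i].
have -> : k ^ m = #|(family F : simpl_pred {ffun 'I_m -> X})|.
  have card_F i : #|F i| = k by rewrite -(card_fiber (Ts i)) cardsE.
  have prod_const (e : seq 'I_m) : foldr muln 1 [seq k | _ <- e] = k ^ size e.
    by elim: e => //= i e ->; rewrite expnS.
  rewrite card_family (eq_image (frefl _) card_F) /image_mem prod_const.
  by rewrite -cardE card_ord.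
apply: eq_card => t; rewrite unfold_in !inE -andbA.
apply/and3P/familyP => [[/forallP Dt _ /eqP fts] i | Ft].
  by rewrite !inE Dt -fts ffunE eqxx.
have Dt i : t i \in D by have := Ft i; rewrite !inE => /andP[].
have fts : fmap t = s.
  by apply/ffunP => i; rewrite ffunE; have := Ft i; rewrite !inE => /andP[_ /eqP].
by subst s; split=> //; apply/forallP.
Qed.

Variables (c : rel X) (c' : rel Y).
Hypothesis c_pullback : {in D &, forall x y, c x y = c' (f x) (f y)}.

Lemma cent_tuple_pullback pw n a (t : {ffun 'I_n -> X}) :
  a \in D -> (forall i, t i \in D) ->
  cent_tuple c pw a t = cent_tuple c' pw (f a) [ffun i => f (t i)].
Proof.
move=> Da Dt; congr andb; first by apply: eq_forallb => i; rewrite ffunE c_pullback.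
by congr implb; do 2![apply: eq_forallb => ?]; rewrite !ffunE c_pullback.
Qed.

Lemma cent_count_pullback pw n :
  cent_count D c pw n = k ^ n.+1 * cent_count T c' pw n.
Proof.
rewrite /cent_count expnS -mulnA big_distrr /= -sum_over_fibers.
apply: eq_bigr => a Da; rewrite -(card_tuples_over_fibers (cent_tuple c' pw (f a))).
apply: eq_card => t; rewrite !inE.
by case: (boolP [forall i, t i \in D]) => //= /forallP Dt; rewrite cent_tuple_pullback.
Qed.

End Fibers.

Local Open Scope group_scope.

Section Commutation.

Variable gT : finGroupType.
Implicit Types (K Z : {group gT}) (x y z : gT).

Definition commg_rel : rel gT := fun x y => [~ x, y] == 1.

(* Independent of the chosen representatives when [A] is the centre
   (commg_repr_coset_center). *)
Definition coset_commg_rel (A : {set gT}) : rel (coset_of A) :=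
  fun q r => commg_rel (repr q) (repr r).

Lemma commg_center_mul K z1 z2 x y :
  z1 \in 'Z(K) -> z2 \in 'Z(K) -> x \in K -> y \in K ->
  [~ z1 * x, z2 * y] = [~ x, y].
Proof.
move=> /centerP[Kz1 cz1] /centerP[Kz2 cz2] Kx Ky.
rewrite commMgJ; have /commgP/eqP -> : commute z1 (z2 * y) by apply/cz1/groupM.
rewrite conj1g mul1g commgMJ.
have /commgP/eqP -> : commute x z2 by apply/commute_sym/cz2.
by rewrite conj1g mulg1.
Qed.

Lemma commg_repr_coset_center K x y : x \in K -> y \in K ->
  [~ repr (coset 'Z(K) x), repr (coset 'Z(K) y)] = [~ x, y].
Proof.
have nZK : K \subset 'N('Z(K)) by apply: normal_norm; apply: center_normal.
have repr_coset u :
    u \in K -> exists2 z, z \in 'Z(K) & repr (coset 'Z(K) u) = z * u.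
  move=> Ku; have := mem_repr_coset (coset 'Z(K) u).
  by rewrite val_coset ?(subsetP nZK) // => /rcosetP.
move=> Kx Ky; have [z1 Zz1 ->] := repr_coset x Kx.
have [z2 Zz2 ->] := repr_coset y Ky.
exact: (commg_center_mul Zz1 Zz2 Kx Ky).
Qed.

Lemma repr_mem_quotient K Z q : Z <| K -> q \in K / Z -> repr q \in K.
Proof.
move=> nsZK Kq; rewrite -(quotientGK nsZK).
by apply: mem_morphpre; rewrite /= ?repr_coset_norm ?coset_reprK.
Qed.

Lemma card_coset_fiber K Z q : Z <| K -> q \in K / Z ->
  #|[set x in K | coset Z x == q]| = #|Z|.
Proof.
move=> nsZK Kq; have q_def : q :=: Z :* repr q.
  by rewrite -val_coset ?repr_coset_norm ?coset_reprK.
transitivity #|q|; last by rewrite q_def card_rcoset.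
apply: eq_card => x; rewrite inE; apply/andP/idP => [[Kx /eqP <-] | qx].
  by rewrite val_coset ?rcoset_refl // (subsetP (normal_norm nsZK)).
split; last by rewrite (coset_mem qx).
move: qx; rewrite q_def => /rcosetP[z Zz ->].
by rewrite groupM ?(repr_mem_quotient nsZK) ?(subsetP (normal_sub nsZK)).
Qed.

End Commutation.

Arguments commg_rel {gT}.
Arguments coset_commg_rel {gT}.

Section TupleConjugation.

Variables (gT : finGroupType) (n : nat).
Implicit Types (G : {group gT}) (t : {ffun 'I_n -> gT}).

Lemma tconj1 t : tconj t 1 = t.
Proof. by apply/ffunP => i; rewrite ffunE conjg1. Qed.

Lemma tconjM t a b : tconj t (a * b) = tconj (tconj t a) b.
Proof. by apply/ffunP => i; rewrite !ffunE conjgM. Qed.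

Definition tconj_action := TotalAction tconj1 tconjM.

Lemma tconj_fixE t a : (tconj t a == t) = [forall i, commg_rel (t i) a].
Proof.
rewrite /commg_rel; apply/eqP/forallP => [fix_t i | fix_t]; last first.
  by apply/ffunP => i; rewrite ffunE; apply/conjg_fixP.
by apply/conjg_fixP; rewrite -{2}fix_t ffunE.
Qed.

Lemma card_conj_orbits G (S : {set {ffun 'I_n -> gT}}) :
  {in G, forall a, {in S, forall t, tconj t a \in S}} ->
  (#|[set conj_orbit G t | t in S]| * #|G|
    = \sum_(a in G) #|[set t in S | tconj t a == t]|)%N.
Proof.
move=> stabS; have actsS : [acts G, on S | tconj_action].
  apply/subsetP => a Ga; rewrite !inE.
  by apply/subsetP => t; rewrite inE; apply: stabS.
rewrite -(Frobenius_Cauchy actsS); apply: eq_bigr => a _.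
by apply: eq_card => t; rewrite !inE sub1set inE.
Qed.

End TupleConjugation.

Lemma alpha_mul_card (gT : finGroupType) (G : {group gT}) n :
  (alpha G n * #|G|)%N = cent_count G commg_rel false n.
Proof.
rewrite /alpha card_conj_orbits => [|a Ga t]; last first.
  by rewrite !inE => /forallP Gt; apply/forallP => i; rewrite ffunE groupJ.
apply: eq_bigr => a _; apply: eq_card => t.
by rewrite !inE tconj_fixE /cent_tuple andbT.
Qed.

Lemma beta_mul_card (gT : finGroupType) (G : {group gT}) n :
  (beta G n * #|G|)%N = cent_count G commg_rel true n.
Proof.
have commE (x y : gT) : (x * y == y * x) = commg_rel x y by apply/eqP/commgP.
rewrite /beta card_conj_orbits => [|a Ga t]; last first.
  rewrite !inE => /andP[/forallP Gt /forallP ct]; apply/andP; split.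
    by apply/forallP => i; rewrite ffunE groupJ.
  apply/forallP => i; apply/forallP => j.
  by rewrite !ffunE -!conjMg (eqP (forallP (ct i) j)).
apply: eq_bigr => a _; apply: eq_card => t.
rewrite !inE tconj_fixE /cent_tuple /=.
have -> : [forall i, forall j, t i * t j == t j * t i]
          = [forall i, forall j, commg_rel (t i) (t j)].
  by do 2![apply: eq_forallb => ?]; apply: commE.
by rewrite -andbA; congr andb; apply: andbC.
Qed.

Lemma cent_count_center (gT : finGroupType) (K : {group gT}) pw n :
  cent_count K commg_rel pw n
    = (#|'Z(K)| ^ n.+1 * cent_count (K / 'Z(K)) (coset_commg_rel 'Z(K)) pw n)%N.
Proof.
have nsZK := center_normal K.
apply: (@cent_count_pullback _ _ (coset 'Z(K))) => [x Kx | q Kq | x y Kx Ky].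
- exact: mem_quotient.
- exact: card_coset_fiber.
- by rewrite /coset_commg_rel /commg_rel commg_repr_coset_center.
Qed.

Section Isoclinism.

Variables (gT hT : finGroupType) (G : {group gT}) (H : {group hT}).
Variables (theta : {morphism G / 'Z(G) >-> coset_of 'Z(H)})
          (phi : {morphism [~: G, G] >-> hT}).
Hypotheses (isoT : isom (G / 'Z(G)) (H / 'Z(H)) theta)
           (isoP : isom [~: G, G] [~: H, H] phi).
Hypothesis phi_commg : forall g1 g2 h1 h2,
  g1 \in G -> g2 \in G -> h1 \in H -> h2 \in H ->
  theta (coset 'Z(G) g1) = coset 'Z(H) h1 ->
  theta (coset 'Z(G) g2) = coset 'Z(H) h2 ->
  phi [~ g1, g2] = [~ h1, h2].

Lemma isoclinic_quotient_mem x : x \in G -> theta (coset 'Z(G) x) \in H / 'Z(H).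
Proof. by move=> Gx; rewrite -(isom_im isoT) mem_morphim ?mem_quotient. Qed.

Lemma isoclinic_commg_rel x y : x \in G -> y \in G ->
  commg_rel x y
    = coset_commg_rel 'Z(H) (theta (coset 'Z(G) x)) (theta (coset 'Z(G) y)).
Proof.
move=> Gx Gy; have nsZH := center_normal H.
have Hx := repr_mem_quotient nsZH (isoclinic_quotient_mem Gx).
have Hy := repr_mem_quotient nsZH (isoclinic_quotient_mem Gy).
rewrite /coset_commg_rel /commg_rel.
rewrite -(phi_commg Gx Gy Hx Hy) ?coset_reprK //.
have G'xy : [~ x, y] \in [~: G, G] by apply: mem_commg.
by rewrite -(morph1 phi) (inj_in_eq (injmP (isom_inj isoP))).
Qed.

Lemma isoclinic_card_fiber q : q \in H / 'Z(H) ->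
  #|[set x in G | theta (coset 'Z(G) x) == q]| = #|'Z(G)|.
Proof.
rewrite -(isom_im isoT) => /morphimP[q0 _ Gq0 ->].
rewrite -(card_coset_fiber (center_normal G) Gq0).
apply: eq_card => x; rewrite !inE.
case Gx: (x \in G) => //=.
by rewrite (inj_in_eq (injmP (isom_inj isoT))) ?mem_quotient.
Qed.

Lemma cent_count_isoclinic pw n :
  cent_count G commg_rel pw n
    = (#|'Z(G)| ^ n.+1 * cent_count (H / 'Z(H)) (coset_commg_rel 'Z(H)) pw n)%N.
Proof.
apply: (@cent_count_pullback _ _ (fun x => theta (coset 'Z(G) x))).
- exact: isoclinic_quotient_mem.
- exact: isoclinic_card_fiber.
- exact: isoclinic_commg_rel.
Qed.

End Isoclinism.

Lemma card_center_quotient (gT : finGroupType) (K : {group gT}) :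
  #|K| = (#|'Z(K)| * #|K / 'Z(K)|)%N.
Proof. by rewrite card_quotient ?normal_norm ?center_normal // Lagrange ?center_sub. Qed.

Theorem theorem4p3 (gT hT : finGroupType) (G : {group gT}) (H : {group hT}) :
  isoclinic G H ->
  (forall n : nat,
     ((alpha G n)%:R = (#|G|%:R / #|H|%:R) ^+ n * (alpha H n)%:R :> rat)%R) /\
  (forall n : nat,
     ((beta G n)%:R = (#|G|%:R / #|H|%:R) ^+ n * (beta H n)%:R :> rat)%R).
Proof.
case=> theta [phi [isoT isoP phi_commg]].
have cent_countG := cent_count_isoclinic isoT isoP phi_commg.
have qGH : #|G / 'Z(G)| = #|H / 'Z(H)| := isom_card isoT.
rewrite (card_center_quotient G) (card_center_quotient H) qGH.
split=> n; apply: ratio_of_scaled_counts; rewrite ?cardG_gt0 //.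
- by rewrite -qGH -(card_center_quotient G) alpha_mul_card cent_countG.
- by rewrite -(card_center_quotient H) alpha_mul_card cent_count_center.
- by rewrite -qGH -(card_center_quotient G) beta_mul_card cent_countG.
- by rewrite -(card_center_quotient H) beta_mul_card cent_count_center.
Qed.
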